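(* For every planar rooted forest $\tau$ (decorated or not) with vertex set $V=V(\tau)$ and all $h,k\ge0$, $$(h+k)^{|\tau|}=\sum_{\substack{V'\sqcup V''=V\\ V''\ \text{down-set for }\ll}}\frac{\tau!}{(V',\ll|_{V'})!\,(V'',\ll|_{V''})!}\,h^{|V'|}k^{|V''|},$$ where the sum runs over all partitions of $V$ into $V'$ and $V''$ such that $V''$ is downward closed for $\ll$ (if $v\in V''$ and $w\ll v$ then $w\in V''$).
   Context: Planar rooted forests: finite left-to-right ordered sequences of planar rooted trees (children of each vertex linearly ordered left to right). On the vertex set, $v<w$ iff $v\ne w$ and $v$ lies on the path from a root to $w$; $\ll$ is the transitive closure of the relation $R$: $vRw$ iff $v<w$, or $v,w$ are children of a common vertex with $v$ to the right of $w$, or $v,w$ are both roots with $v$ to the right of $w$. For a finite poset $(P,\le)$ and $s<t$, $\Omega^{st}_P=\{(t_v)_{v\in P}\in[s,t]^P:\ t_v\ge t_w\text{ whenever }v<w\}$ and the poset factorial $P!$ is defined by $\mathrm{Vol}(\Omega^{st}_P)=(t-s)^{|P|}/P!$ (empty poset: $1$). The planar factorial is $\tau!:=(V(\tau),\ll)!$; $(W,\ll|_W)!$ is the factorial of the subset $W$ with the restricted order. *)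

From Stdlib Require Import Reals ClassicalEpsilon.
From mathcomp Require Import all_boot.

Set Implicit Arguments.
Unset Strict Implicit.
Unset Printing Implicit Defensive.

Definition Rleb (a b : R) : bool := if Rle_dec a b then true else false.

(* Membership of a point x : T -> R (only its coordinates on W matter) in
   Omega^{st}_{(W, lt|_W)} = { (t_v)_{v in W} in [s,t]^W :
                                 t_v >= t_w whenever v < w }. *)
Definition in_Omega (T : finType) (lt : rel T) (W : {set T}) (s t : R)
    (x : T -> R) : bool :=
  [forall v in W, Rleb s (x v) && Rleb (x v) t] &&
  [forall v in W, forall w in W, lt v w ==> Rleb (x w) (x v)].

Definition grid_point (T : finType) (N : nat) (s t : R)
    (g : {ffun T -> 'I_N.+2}) (v : T) : R :=
  Rplus s (Rdiv (Rmult (Rminus t s) (INR (nat_of_ord (g v)))) (INR N.+1)).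

(* Riemann (Jordan) sum of the indicator of Omega on the grid of mesh
   (t-s)/(N+1) in [s,t]^W:
     #(grid points of [s,t]^W lying in Omega) * mesh^|W|.
   (Grid functions are required to be 0 outside W, so that they are exactly
   the grid points of [s,t]^W.) *)
Definition jordan_sum (T : finType) (lt : rel T) (W : {set T}) (s t : R)
    (N : nat) : R :=
  Rmult
    (INR #|[set g : {ffun T -> 'I_N.+2} |
              [forall v in ~: W, g v == ord0] &&
              in_Omega lt W s t (grid_point s t g)]|)
    (pow (Rdiv (Rminus t s) (INR N.+1)) #|W|).

Definition is_Omega_volume (T : finType) (lt : rel T) (W : {set T})
    (s t vol : R) : Prop :=
  Un_cv (jordan_sum lt W s t) vol.

Definition is_poset_factorial (T : finType) (lt : rel T) (W : {set T})
    (f : R) : Prop :=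
  Rlt 0 f /\
  forall s t : R, Rlt s t ->
    is_Omega_volume lt W s t (Rdiv (pow (Rminus t s) #|W|) f).

Definition poset_factorial (T : finType) (lt : rel T) (W : {set T}) : R :=
  epsilon (inhabits R1) (is_poset_factorial lt W).

(* Planar rooted forests (decorated by A; take A = unit for undecorated)     *)

Inductive ptree (A : Type) : Type :=
  PNode : A -> seq (ptree A) -> ptree A.

Definition pforest (A : Type) := seq (ptree A).

(* Vertices are encoded by addresses: [:: i; j1; ...; jk] is the jk-th child
   of ... of the j1-th child of the i-th root (all indices 0-based, from the
   left).  [tverts t] lists addresses relative to the root of t (root = [::]). *)
Fixpoint tverts (A : Type) (t : ptree A) : seq (seq nat) :=
  match t with
  | PNode _ cs =>
      [::] :: (fix fv (i : nat) (l : seq (ptree A)) : seq (seq nat) :=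
                 match l with
                 | [::] => [::]
                 | c :: l' => [seq i :: p | p <- tverts c] ++ fv i.+1 l'
                 end) 0 cs
  end.

Fixpoint fverts_from (A : Type) (i : nat) (f : pforest A) : seq (seq nat) :=
  match f with
  | [::] => [::]
  | c :: f' => [seq i :: p | p <- tverts c] ++ fverts_from i.+1 f'
  end.

Definition fverts (A : Type) (f : pforest A) : seq (seq nat) := fverts_from 0 f.

Definition fvert (A : Type) (f : pforest A) : finType := 'I_(size (fverts f)).

Definition addr (A : Type) (f : pforest A) (v : fvert f) : seq nat :=
  nth [::] (fverts f) v.

(* v < w : v <> w and v lies on the path from a root to w
   (i.e. the address of v is a proper prefix of that of w). *)
Definition anc_lt (A : Type) (f : pforest A) : rel (fvert f) :=
  fun v w => (addr v != addr w) && prefix (addr v) (addr w).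

(* addr v = p ++ [:: a], addr w = p ++ [:: b] with a > b: for p = [::] both
   are roots with v to the right of w; otherwise they are children of the
   common vertex p with v to the right of w. *)
Definition right_of (av aw : seq nat) : bool :=
  [&& 0 < size av, size av == size aw,
      take (size av).-1 av == take (size aw).-1 aw
    & last 0 aw < last 0 av].

Definition relR (A : Type) (f : pforest A) : rel (fvert f) :=
  fun v w => anc_lt v w || right_of (addr v) (addr w).

Definition tclosure (T : finType) (r : rel T) : rel T :=
  fun v w => [exists u, r v u && connect r u w].

Definition ll (A : Type) (f : pforest A) : rel (fvert f) := tclosure (@relR A f).

Definition ll_downset (A : Type) (f : pforest A) (W : {set fvert f}) : bool :=
  [forall v in W, forall w, ll w v ==> (w \in W)].

(* For a strict order on an n-element set W, the Riemann sums defining the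
   volume of Omega count the order-reversing maps from W to a grid of m points.
   This count is the order polynomial sum_j a_j 'C(m, j), where a_j counts the
   cuts of W into j successive nonempty down-sets; after rescaling by m^n only
   the top coefficient a_n = e(W), the number of linear extensions, survives,
   so that W! = n! / e(W).  A linear extension of V is a linear extension of a
   down-set V'' followed by one of V' = V \ V'', hence the sum of e(V') e(V'')
   over the down-sets V'' of size j is e(V), and the identity becomes the
   binomial theorem. *)

From Stdlib Require Import Reals Lra ClassicalEpsilon.
From Coquelicot Require Import Coquelicot.
From HB Require Import structures.
From mathcomp Require Import all_boot zify.

Set Implicit Arguments.
Unset Strict Implicit.
Unset Printing Implicit Defensive.

Section Downsets.
Local Open Scope nat_scope.
Variables (T : finType) (r : rel T).

Lemma sum_cards1 (P : pred {set T}) (F : {set T} -> nat) :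
  \sum_(D | P D && (#|D| == 1)) F D = \sum_(x | P [set x]) F [set x].
Proof.
have inj : {in [set x | P [set x]] &, injective (fun x : T => [set x])}.
  by move=> x y _ _ /set1_inj.
rewrite [RHS](eq_bigl (fun x => x \in [set x | P [set x]])); last by move=> x; rewrite inE.
rewrite -(big_imset F inj) /=.
apply: eq_bigl => D; apply/idP/imsetP.
  by move=> /andP[PD /cards1P[x Dx]]; exists x; rewrite // inE -Dx.
by move=> [x]; rewrite inE => Px ->; rewrite Px cards1.
Qed.

Definition downset (W D : {set T}) : bool :=
  (D \subset W) && [forall v in D, forall w in W, r w v ==> (w \in D)].

Lemma downsetP (W D : {set T}) :
  reflect (D \subset W /\ forall v w, v \in D -> w \in W -> r w v -> w \in D)
          (downset W D).
Proof.
apply: (iffP andP) => [[sDW /forall_inP H]|[sDW H]]; split => //.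
  by move=> v w vD wW rwv; move/forall_inP: (H v vD) => /(_ w wW)/implyP; apply.
by apply/forall_inP => v vD; apply/forall_inP => w wW; apply/implyP; apply: H.
Qed.

Lemma downset0 (W : {set T}) : downset W set0.
Proof. by apply/downsetP; split=> [|v w]; rewrite ?sub0set ?inE. Qed.

Lemma downset1_mem (W : {set T}) (x : T) : downset W [set x] -> x \in W.
Proof. by case/andP; rewrite sub1set. Qed.

Lemma cardsD1_succ (W : {set T}) (x : T) (n : nat) :
  x \in W -> #|W| = n.+1 -> #|W :\ x| = n.
Proof. by move=> xW; rewrite (cardsD1 x W) xW add1n => -[]. Qed.

Lemma downsetxx (W : {set T}) : downset W W.
Proof. by apply/downsetP; split. Qed.

(* [wlayers m W] counts the ways of cutting [W] into [m] successive, possibly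
   empty, down-set layers; [slayers j W] those into [j] nonempty layers. *)
Fixpoint wlayers (m : nat) (W : {set T}) : nat :=
  if m is m'.+1 then \sum_(D | downset W D) wlayers m' (W :\: D)
  else W == set0.

Fixpoint slayers (j : nat) (W : {set T}) : nat :=
  if j is j'.+1 then \sum_(D | downset W D && (D != set0)) slayers j' (W :\: D)
  else W == set0.

Lemma wlayersE (m : nat) (W : {set T}) :
  wlayers m W = \sum_(j < m.+1) slayers j W * 'C(m, j).
Proof.
elim: m W => [|m IH] W; first by rewrite big_ord1 muln1.
rewrite /= (bigD1 set0) ?downset0 //= setD0 IH.
rewrite [RHS]big_ord_recl bin0 muln1.
under [in RHS]eq_bigr => i _ do rewrite lift0 binS mulnDr.
rewrite big_split /= addnA; congr (_ + _).
  rewrite [LHS]big_ord_recl bin0 muln1; congr (_ + _).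
  rewrite [RHS]big_ord_recr /= bin_small // muln0 addn0.
  by apply: eq_bigr.
under [RHS]eq_bigr do rewrite big_distrl /=.
by rewrite exchange_big; apply: eq_bigr => D _; rewrite IH.
Qed.

Lemma card_setD_downset (W D : {set T}) :
  downset W D -> #|W :\: D| = #|W| - #|D| /\ #|D| <= #|W|.
Proof.
by case/andP=> sDW _; rewrite cardsD (setIidPr sDW); split; last exact: subset_leq_card.
Qed.

Lemma slayers_eq0 (j : nat) (W : {set T}) : #|W| < j -> slayers j W = 0.
Proof.
elim: j W => [|j IH] W //= Hj.
apply: big1 => D /andP[dD D0]; apply: IH.
have [-> leDW] := card_setD_downset dD.
by move: D0 Hj; rewrite -card_gt0; lia.
Qed.

Lemma slayers_card (W : {set T}) (n : nat) : #|W| = n.+1 ->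
  slayers n.+1 W = \sum_(x | downset W [set x]) slayers n (W :\ x).
Proof.
move=> HW /=; rewrite -(sum_cards1 (downset W) (fun D => slayers n (W :\: D))).
rewrite big_mkcond [RHS]big_mkcond; apply: eq_bigr => D _.
case dD: (downset W D) => //=; have [cWD leDW] := card_setD_downset dD.
rewrite -card_gt0; case: eqP => [-> //|D1]; case: posnP => //= D0.
by apply: slayers_eq0; rewrite cWD HW; lia.
Qed.

(* A cut of [W] into [#|W|] nonempty layers is a linear extension of [r] on [W]. *)
Definition nlinext (W : {set T}) : nat := slayers #|W| W.

Lemma nlinext0 : nlinext set0 = 1.
Proof. by rewrite /nlinext cards0 /= eqxx. Qed.

Lemma nlinextE (W : {set T}) (n : nat) : #|W| = n.+1 ->
  nlinext W = \sum_(x | downset W [set x]) nlinext (W :\ x).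
Proof.
move=> HW; rewrite /nlinext HW slayers_card //; apply: eq_bigr => x dx.
by rewrite (cardsD1_succ (downset1_mem dx) HW).
Qed.

Lemma downset_trans (W D E : {set T}) :
  downset W D -> downset D E -> downset W E.
Proof.
move=> /downsetP[sDW HD] /downsetP[sED HE]; apply/downsetP.
split=> [|v w vE wW rwv]; first exact: subset_trans sED sDW.
by apply: (HE v) => //; apply: (HD v) => //; apply: (subsetP sED).
Qed.

Lemma downset1_sub (W D : {set T}) (x : T) :
  downset W [set x] -> D \subset W -> x \in D -> downset D [set x].
Proof.
move=> /downsetP[_ Hx] sDW xD; apply/downsetP; split=> [|v w vx wD]; first by rewrite sub1set.
exact: Hx vx (subsetP sDW w wD).
Qed.

Lemma downset_in_downset1 (W D : {set T}) (x : T) : downset W D ->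
  downset D [set x] = downset W [set x] && (x \in D).
Proof.
move=> dD; apply/idP/andP => [dx|[dx xD]]; last exact: downset1_sub dx (proj1 (andP dD)) xD.
by split; [exact: downset_trans dD dx | exact: downset1_mem dx].
Qed.

Lemma downset_setU1 (W D : {set T}) (x : T) : downset W [set x] -> x \notin D ->
  downset W (x |: D) = downset (W :\ x) D.
Proof.
move=> dx xD; have xW := downset1_mem dx; move/downsetP: dx => [_ xmin].
apply/downsetP/downsetP => [[sDW HD]|[sDW HD]]; split.
- apply/subsetP => y yD; rewrite !inE (subsetP sDW) ?inE ?yD ?orbT // andbT.
  by apply: contraNneq xD => <-.
- move=> v w vD; rewrite !inE => /andP[wx wW] rwv.
  by have := HD v w; rewrite !inE vD orbT (negbTE wx) => /(_ isT wW rwv).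
- by rewrite subUset sub1set xW (subset_trans sDW) ?subsetDl.
- move=> v w; rewrite !inE => /orP[/eqP-> wW rwx|vD wW rwv].
    by have := xmin x w; rewrite !inE eqxx => /(_ isT wW rwx) ->.
  have [//|wx] := eqVneq w x; by rewrite (HD v) ?orbT // !inE wx.
Qed.

Lemma sum_downsets_min (W : {set T}) (x : T) (j : nat) (F : {set T} -> nat) :
  downset W [set x] ->
  \sum_(D | [&& downset W D, #|D| == j.+1 & x \in D]) F D =
  \sum_(D | downset (W :\ x) D && (#|D| == j)) F (x |: D).
Proof.
move=> dx; rewrite (reindex_onto (fun D => x |: D) (fun D => D :\ x)) /=; last first.
  by move=> D /and3P[_ _ xD]; apply: setD1K.
apply: eq_bigl => D; apply/idP/idP.
  move=> /andP[/and3P[dD /eqP cD _] /eqP eD].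
  have xD : x \notin D by rewrite -eD !inE eqxx.
  by move: dD cD; rewrite downset_setU1 // cardsU1 xD add1n => -> [->]; rewrite eqxx.
move=> /andP[dD /eqP cD]; have xnD : x \notin D.
  by apply/negP => /(subsetP (proj1 (andP dD))); rewrite !inE eqxx.
by rewrite downset_setU1 // cardsU1 xnD cD setU1K // setU11 dD !eqxx.
Qed.

(* A linear extension of [W] is one of a down-set [D] followed by one of [W :\: D]. *)
Lemma nlinext_split (W : {set T}) (j : nat) : j <= #|W| ->
  \sum_(D | downset W D && (#|D| == j)) nlinext D * nlinext (W :\: D) = nlinext W.
Proof.
have split0 W' : \sum_(D | downset W' D && (#|D| == 0)) nlinext D * nlinext (W' :\: D)
                 = nlinext W'.
  rewrite (big_pred1 set0) ?nlinext0 ?setD0 ?mul1n // => D.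
  by rewrite /= cards_eq0 andbC; case: eqP => [->|_]; rewrite ?downset0.
move Hn: #|W| => n; elim: n W j Hn => [|n IH] W [|j] HW Hj; try exact: split0.
  by rewrite ltn0 in Hj.
under eq_bigr => D /andP[_ /eqP cD] do rewrite (nlinextE cD) big_distrl /=.
rewrite (exchange_big_dep (fun x => downset W [set x])) /=; last first.
  by move=> D x /andP[dD _]; rewrite (downset_in_downset1 _ dD) => /andP[].
rewrite (nlinextE HW); apply: eq_bigr => x dx.
have HWx := cardsD1_succ (downset1_mem dx) HW.
rewrite -(IH (W :\ x) j HWx); last by lia.
rewrite (eq_bigl (fun D => [&& downset W D, #|D| == j.+1 & x \in D])); last first.
  by move=> D; case dD: (downset W D); rewrite /= ?(downset_in_downset1 _ dD) ?dx ?andbF.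
rewrite sum_downsets_min //; apply: eq_bigr => D /andP[/andP[sD _] _].
have xD : x \notin D by apply/negP => /(subsetP sD); rewrite !inE eqxx.
by rewrite setU1K // setDDl.
Qed.

Definition order_reversing (W : {set T}) (m : nat) (g : {ffun T -> 'I_m}) : bool :=
  [forall v in W, forall w in W, r v w ==> (g w <= g v)].

Definition grid_maps (W : {set T}) (m : nat) : {set {ffun T -> 'I_m.+1}} :=
  [set g : {ffun T -> 'I_m.+1} | [forall v in ~: W, g v == ord0] && order_reversing W g].

Lemma grid_mapsP (W : {set T}) (m : nat) (g : {ffun T -> 'I_m.+1}) :
  reflect ((forall v, v \notin W -> g v = ord0) /\
           (forall v w, v \in W -> w \in W -> r v w -> g w <= g v))
          (g \in grid_maps W m).
Proof.
rewrite inE; apply: (iffP andP) => [[/forall_inP H0 /forall_inP H]|[H0 H]]; split.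
- by move=> v vW; apply/eqP; apply: H0; rewrite inE.
- by move=> v w vW wW; move/forall_inP: (H v vW) => /(_ w wW)/implyP.
- by apply/forall_inP => v; rewrite inE => /H0 ->.
- by apply/forall_inP => v vW; apply/forall_inP => w wW; apply/implyP; apply: H.
Qed.

Definition top_level (W : {set T}) (m : nat) (g : {ffun T -> 'I_m.+1}) : {set T} :=
  [set v in W | g v == ord_max].

Definition raise (m : nat) (D : {set T}) (g : {ffun T -> 'I_m.+1}) : {ffun T -> 'I_m.+2} :=
  [ffun v => if v \in D then ord_max else widen_ord (leqnSn m.+1) (g v)].

Definition lower (m : nat) (g : {ffun T -> 'I_m.+2}) : {ffun T -> 'I_m.+1} :=
  [ffun v => inord (g v)].

Lemma downset_top_level (W : {set T}) (m : nat) (g : {ffun T -> 'I_m.+1}) :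
  g \in grid_maps W m -> downset W (top_level W g).
Proof.
move=> /grid_mapsP[_ H]; apply/downsetP; split=> [|v w].
  by apply/subsetP => v; rewrite inE => /andP[].
rewrite !inE => /andP[vW /eqP gv] wW rwv; rewrite wW; apply/eqP/val_inj.
by have := H w v wW vW rwv; have := ltn_ord (g w); rewrite gv /=; lia.
Qed.

Lemma raise_inj (W D : {set T}) (m : nat) :
  {in grid_maps (W :\: D) m &, injective (@raise m D)}.
Proof.
move=> g1 g2 /grid_mapsP[H1 _] /grid_mapsP[H2 _] /ffunP E; apply/ffunP => v.
have := E v; rewrite !ffunE; case: ifP => vD; first by rewrite H1 ?H2 // !inE vD.
by move=> /(congr1 val) /= /val_inj.
Qed.

Lemma raise_grid_maps (W D : {set T}) (m : nat) (g : {ffun T -> 'I_m.+1}) :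
  downset W D -> g \in grid_maps (W :\: D) m ->
  raise D g \in grid_maps W m.+1 /\ top_level W (raise D g) = D.
Proof.
move=> /downsetP[sDW HD] /grid_mapsP[H0 H]; split.
  apply/grid_mapsP; split=> [v vW|v w vW wW rvw]; rewrite !ffunE.
    have vD : v \notin D by apply: contra vW; apply: (subsetP sDW).
    by rewrite (negbTE vD) H0 ?inE ?(negbTE vW) ?andbF //; apply: val_inj.
  case wD: (w \in D); first by rewrite (HD w v wD vW rvw).
  case vD: (v \in D); first by rewrite leq_ord.
  by apply: H => //; rewrite !inE ?vD ?wD.
apply/setP => v; rewrite !inE ffunE; case vD: (v \in D).
  by rewrite eqxx andbT (subsetP sDW).
by case: eqP; rewrite ?andbF // => /(congr1 val) /= E; have := ltn_ord (g v); rewrite E ltnn.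
Qed.

Lemma lower_grid_maps (W : {set T}) (m : nat) (g : {ffun T -> 'I_m.+2}) :
  g \in grid_maps W m.+1 ->
  lower g \in grid_maps (W :\: top_level W g) m /\ g = raise (top_level W g) (lower g).
Proof.
move=> /grid_mapsP[H0 H].
have lt_g v : v \in W -> v \notin top_level W g -> g v < m.+1.
  move=> vW; rewrite inE vW /= => gv; have := ltn_ord (g v).
  by rewrite ltnS leq_eqVlt => /orP[/eqP E|//]; case/eqP: gv; apply: val_inj.
split.
  apply/grid_mapsP; split=> [v|v w]; rewrite !ffunE.
    rewrite !inE negb_and negbK => /orP[/andP[vW /eqP ->]|vW]; apply: val_inj.
      by rewrite /= /inord /insubd insubF //= ltnn.
    by rewrite H0 //= inordK.
  rewrite !in_setD => /andP[vD vW] /andP[wD wW] rvw.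
  by rewrite !inordK ?lt_g //; apply: H.
apply/ffunP => v; rewrite !ffunE; case: ifP => [|vD].
  by rewrite inE => /andP[_ /eqP ->].
apply: val_inj; rewrite /= inordK //; case vW: (v \in W); first by rewrite lt_g ?vD.
by rewrite H0 ?vW.
Qed.

(* Strip off the top level of [g], which is a down-set. *)
Lemma card_grid_maps (W : {set T}) (m : nat) : #|grid_maps W m| = wlayers m.+1 W.
Proof.
elim: m W => [|m IH] W.
  have -> : grid_maps W 0 = setT.
    apply/setP => g; rewrite in_setT; apply/grid_mapsP; split.
      by move=> v _; rewrite [g v]ord1.
    by move=> v w _ _ _; rewrite [g v]ord1 [g w]ord1.
  rewrite cardsT card_ffun card_ord exp1n /= (bigD1 W) ?downsetxx //= setDv eqxx big1 //.
  move=> D /andP[/downsetP[sDW _] DW]; apply/eqP; rewrite eqb0 setD_eq0.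
  by apply: contra DW => sWD; rewrite eqEsubset sDW sWD.
rewrite -sum1_card (partition_big (@top_level W m.+1) (downset W)) /=; last first.
  exact: downset_top_level.
apply: eq_bigr => D dD; rewrite sum1_card -[RHS]/(wlayers m.+1 (W :\: D)) -IH.
rewrite -(card_in_imset (@raise_inj W D m)); apply: eq_card => g.
rewrite -[g \in (fun _ => _)]/((g \in grid_maps W m.+1) && (top_level W g == D)).
apply/andP/imsetP => [[gS /eqP tg]|[g' g'S ->]].
  by have [lS ->] := lower_grid_maps gS; exists (lower g); rewrite -tg.
by have [-> ->] := raise_grid_maps dD g'S.
Qed.
End Downsets.

Section StrictOrder.
Local Open Scope nat_scope.
Variables (T : finType) (r : rel T).
Hypotheses (r_trans : transitive r) (r_irr : irreflexive r).

Lemma downset1_exists (W : {set T}) : W != set0 -> exists x, downset r W [set x].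
Proof.
case/set0Pn=> x0 x0W; pose below x := #|[set y in W | r y x]|.
case: (arg_minnP below x0W) => x xW xmin; exists x; apply/downsetP.
split=> [|v w]; first by rewrite sub1set.
rewrite inE => /eqP -> wW rwx; exfalso.
suff : below w < below x by rewrite ltnNge xmin.
apply: proper_card; apply/properP; split.
  by apply/subsetP => y; rewrite !inE => /andP[-> ryw]; apply: r_trans ryw rwx.
by exists w; rewrite !inE ?wW ?rwx ?r_irr.
Qed.

Lemma nlinext_gt0 (W : {set T}) : 0 < nlinext r W.
Proof.
move Hn: #|W| => n; elim: n W Hn => [|n IH] W HW.
  by move/eqP: HW; rewrite cards_eq0 => /eqP ->; rewrite nlinext0.
have [x dx] : exists x, downset r W [set x] by apply: downset1_exists; rewrite -card_gt0 HW.
rewrite (nlinextE r HW) (bigD1 x) //=; apply: leq_trans (leq_addr _ _).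
exact/IH/(cardsD1_succ (downset1_mem dx) HW).
Qed.
End StrictOrder.

Section ForestOrder.
Local Open Scope nat_scope.

(* Reverse lexicographic order on addresses: a larger index comes first, and a
   proper prefix comes before its extensions.  Every step of [relR] goes down
   in it, so [ll] is a strict order. *)
Fixpoint addr_before (a b : seq nat) : bool :=
  match a, b with
  | [::], [::] => false
  | [::], _ :: _ => true
  | _ :: _, [::] => false
  | x :: a', y :: b' => (y < x) || ((x == y) && addr_before a' b')
  end.

Lemma addr_before_irr : irreflexive addr_before.
Proof. by elim=> //= x a IH; rewrite ltnn eqxx. Qed.

Lemma addr_before_trans : transitive addr_before.
Proof.
move=> b a c; elim: a b c => [|x a IH] [|y b] [|z c] //=.
move=> /orP[yx|/andP[/eqP xy ab]] /orP[zy|/andP[/eqP yz bc]].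
- by rewrite (ltn_trans zy yx).
- by rewrite -yz yx.
- by rewrite xy zy.
- by rewrite xy yz eqxx (IH _ _ ab bc) orbT.
Qed.

Lemma addr_before_prefix (a b : seq nat) : a != b -> prefix a b -> addr_before a b.
Proof.
elim: a b => [|x a IH] [|y b] //= ab /andP[/eqP xy pab].
by rewrite xy eqxx IH ?orbT //; apply: contraNneq ab => ->; rewrite xy.
Qed.

Lemma addr_before_right (av aw : seq nat) : right_of av aw -> addr_before av aw.
Proof.
case/and4P; case/lastP: av => [//|p x] _; case/lastP: aw => [|q y].
  by rewrite size_rcons.
rewrite !size_rcons /= !last_rcons => /eqP[spq].
rewrite -!cats1 !take_size_cat // => /eqP-> yx.
by elim: q {spq} => [|z q IH] /=; rewrite ?yx // eqxx IH orbT.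
Qed.

Variables (A : Type) (f : pforest A).

Lemma relR_before (v w : fvert f) : relR v w -> addr_before (addr v) (addr w).
Proof.
by case/orP=> [/andP[ne pr]|ro]; [exact: addr_before_prefix | exact: addr_before_right].
Qed.

Lemma ll_before (v w : fvert f) : ll v w -> addr_before (addr v) (addr w).
Proof.
case/existsP=> u /andP[/relR_before ru /connectP[p]].
elim: p u ru => [|z p IH] u ru /=; first by move=> _ ->.
by case/andP=> /relR_before uz pz lw; apply: IH pz lw; apply: addr_before_trans uz.
Qed.

Lemma ll_trans : transitive (@ll A f).
Proof.
move=> y x z /existsP[u1 /andP[r1 c1]] /existsP[u2 /andP[r2 c2]].
apply/existsP; exists u1; rewrite r1 /=.
by apply: connect_trans c1 _; apply: connect_trans c2; exact: connect1.
Qed.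

Lemma ll_irr : irreflexive (@ll A f).
Proof. by move=> x; apply: contraFF (addr_before_irr (addr x)); apply: ll_before. Qed.
End ForestOrder.

HB.instance Definition _ := Monoid.isComLaw.Build R R0 Rplus
  (fun a b c => esym (Rplus_assoc a b c)) Rplus_comm Rplus_0_l.
HB.instance Definition _ := Monoid.isComLaw.Build R R1 Rmult
  (fun a b c => esym (Rmult_assoc a b c)) Rmult_comm Rmult_1_l.
HB.instance Definition _ := Monoid.isMulLaw.Build R R0 Rmult Rmult_0_l Rmult_0_r.
HB.instance Definition _ := Monoid.isAddLaw.Build R Rmult Rplus
  Rmult_plus_distr_r Rmult_plus_distr_l.

Lemma INR_sum (I : Type) (s : seq I) (P : pred I) (F : I -> nat) :
  INR (\sum_(i <- s | P i) F i) = \big[Rplus/R0]_(i <- s | P i) INR (F i).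
Proof. exact: (big_morph INR plus_INR). Qed.

Lemma INR_prod (I : Type) (s : seq I) (P : pred I) (F : I -> nat) :
  INR (\prod_(i <- s | P i) F i) = \big[Rmult/R1]_(i <- s | P i) INR (F i).
Proof. exact: (big_morph INR mult_INR). Qed.

Lemma fact_factorial (n : nat) : Factorial.fact n = n`!.
Proof. by elim: n => //= n ->; rewrite factS. Qed.

Lemma sum_f_R0_big (g : nat -> R) (n : nat) :
  sum_f_R0 g n = \big[Rplus/R0]_(i < n.+1) g i.
Proof. by elim: n => [|n IH] /=; rewrite ?big_ord1 // IH [in RHS]big_ord_recr. Qed.

Lemma bigprod_Rdiv (j : nat) (a : nat -> R) (b : R) : b <> 0 ->
  \big[Rmult/R1]_(i < j) (a i / b) = (\big[Rmult/R1]_(i < j) a i) / b ^ j.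
Proof.
move=> b0; elim: j => [|j IH]; first by rewrite !big_ord0 /=; field.
by rewrite !big_ord_recr IH /=; field; split => //; apply: pow_nonzero.
Qed.

Lemma is_lim_seq_bigsum (K : nat) (u : nat -> nat -> R) (l : nat -> R) :
  (forall j, (j < K)%N -> is_lim_seq (u j) (l j)) ->
  is_lim_seq (fun N => \big[Rplus/R0]_(j < K) u j N) (\big[Rplus/R0]_(j < K) l j).
Proof.
elim: K => [|K IH] H.
  rewrite big_ord0; apply: (is_lim_seq_ext (fun=> R0)); last exact: is_lim_seq_const.
  by move=> N; rewrite big_ord0.
rewrite big_ord_recr /=.
apply: (is_lim_seq_ext _ _ _ _ (is_lim_seq_plus' _ _ _ _ (IH _) (H K (ltnSn K)))).
  by move=> N; rewrite big_ord_recr.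
by move=> j Hj; apply: H; apply: ltnW.
Qed.

Lemma is_lim_seq_bigprod (K : nat) (u : nat -> nat -> R) (l : nat -> R) :
  (forall j, (j < K)%N -> is_lim_seq (u j) (l j)) ->
  is_lim_seq (fun N => \big[Rmult/R1]_(j < K) u j N) (\big[Rmult/R1]_(j < K) l j).
Proof.
elim: K => [|K IH] H.
  rewrite big_ord0; apply: (is_lim_seq_ext (fun=> R1)); last exact: is_lim_seq_const.
  by move=> N; rewrite big_ord0.
rewrite big_ord_recr /=.
apply: (is_lim_seq_ext _ _ _ _ (is_lim_seq_mult' _ _ _ _ (IH _) (H K (ltnSn K)))).
  by move=> N; rewrite big_ord_recr.
by move=> j Hj; apply: H; apply: ltnW.
Qed.

Lemma is_lim_seq_inv_succ : is_lim_seq (fun N => / INR N.+1) 0.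
Proof.
apply: (is_lim_seq_inv _ p_infty) => //.
exact: (proj1 (is_lim_seq_incr_1 INR p_infty) is_lim_seq_INR).
Qed.

Lemma is_lim_seq_inv_succ_pow (k : nat) :
  is_lim_seq (fun N => (/ INR N.+1) ^ k) ((if k is 0 then 1 else 0) : R).
Proof.
elim: k => [|k IH] /=; first exact: is_lim_seq_const.
by have := is_lim_seq_mult' _ _ _ _ is_lim_seq_inv_succ IH; rewrite Rmult_0_l.
Qed.

Lemma is_lim_seq_shift_ratio (i : nat) : is_lim_seq (fun N => INR (N.+2 - i) / INR N.+1) 1.
Proof.
apply: (is_lim_seq_ext_loc (fun N => 1 + (1 - INR i) * / INR N.+1)).
  exists i => N HN; rewrite minus_INR; last by apply/leP; lia.
  by rewrite !S_INR; field; have := pos_INR N; lra.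
have := is_lim_seq_plus' _ _ _ _ (is_lim_seq_const 1)
         (is_lim_seq_mult' _ _ _ _ (is_lim_seq_const (1 - INR i)) is_lim_seq_inv_succ).
by rewrite Rmult_0_r Rplus_0_r.
Qed.

Lemma binomial_ratioE (N j n : nat) : (j <= n)%N ->
  INR 'C(N.+2, j) / INR N.+1 ^ n =
  (\big[Rmult/R1]_(i < j) (INR (N.+2 - i) / INR N.+1)) * / INR (Factorial.fact j)
   * (/ INR N.+1) ^ (n - j).
Proof.
move=> Hjn; have b0 : INR N.+1 <> 0 by apply: not_0_INR.
have f0 : INR (Factorial.fact j) <> 0 by apply: INR_fact_neq_0.
rewrite (@bigprod_Rdiv j (fun i => INR (N.+2 - i))) // -INR_prod -ffact_prod.
rewrite -bin_ffact mult_INR -fact_factorial.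
have -> : n = (j + (n - j))%N by lia.
rewrite pow_add -Rinv_pow // addKn; field.
by split; [|split] => //; apply: pow_nonzero.
Qed.

Lemma is_lim_seq_binomial_ratio (j n : nat) : (j <= n)%N ->
  is_lim_seq (fun N => INR 'C(N.+2, j) / INR N.+1 ^ n)
             ((if j == n then / INR (Factorial.fact n) else 0) : R).
Proof.
move=> Hjn; apply: (is_lim_seq_ext _ _ _ (fun N => esym (binomial_ratioE N Hjn))).
have Hp : is_lim_seq (fun N => \big[Rmult/R1]_(i < j) (INR (N.+2 - i) / INR N.+1)) 1.
  have := @is_lim_seq_bigprod j (fun i N => INR (N.+2 - i) / INR N.+1) (fun=> 1)
            (fun i _ => @is_lim_seq_shift_ratio i).
  by rewrite big1_eq.
have := is_lim_seq_mult' _ _ _ _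
  (is_lim_seq_mult' _ _ _ _ Hp (is_lim_seq_const (/ INR (Factorial.fact j))))
  (@is_lim_seq_inv_succ_pow (n - j)%N).
case: eqP => [->|ne]; first by rewrite subnn /= Rmult_1_l Rmult_1_r.
by case E: (n - j)%N => [|k]; [lia | rewrite Rmult_0_r].
Qed.

Lemma sum_ord_widen0 (F : nat -> nat) (a b : nat) :
  (forall j, (a <= j)%N -> F j = 0%N) -> (a <= b)%N ->
  (\sum_(j < a) F j = \sum_(j < b) F j)%N.
Proof.
move=> F0 Hab; rewrite -!(big_mkord xpredT) (big_cat_nat (leq0n a) Hab) /=.
have -> : (\sum_(a <= i < b) F i = 0)%N.
  by rewrite big_nat_cond big1 // => j /andP[/andP[/F0]].
by rewrite addn0.
Qed.

(* The order polynomial, as a polynomial of degree [#|W|] in [m]. *)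
Lemma wlayers_sum (T : finType) (r : rel T) (m : nat) (W : {set T}) :
  wlayers r m W = (\sum_(j < #|W|.+1) slayers r j W * 'C(m, j))%N.
Proof.
pose F j := (slayers r j W * 'C(m, j))%N; pose K := (m.+1 + #|W|.+1)%N.
rewrite wlayersE (@sum_ord_widen0 F m.+1 K) ?(@sum_ord_widen0 F #|W|.+1 K) ?leq_addr ?leq_addl //.
- by move=> j Hj; rewrite /F slayers_eq0 ?mul0n.
- by move=> j Hj; rewrite /F bin_small ?muln0.
Qed.

(* Only the top coefficient of the order polynomial survives the rescaling. *)
Lemma is_lim_seq_grid_count (T : finType) (r : rel T) (W : {set T}) (a : R) :
  is_lim_seq (fun N => INR (wlayers r N.+2 W) * (a / INR N.+1) ^ #|W|)
             (INR (nlinext r W) / INR (Factorial.fact #|W|) * a ^ #|W|).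
Proof.
set n := #|W|.
pose u j N := INR (slayers r j W) * a ^ n * (INR 'C(N.+2, j) / INR N.+1 ^ n).
apply: (is_lim_seq_ext (fun N => \big[Rplus/R0]_(j < n.+1) u j N)).
  move=> N; rewrite wlayers_sum -/n INR_sum big_distrl /=; apply: eq_bigr => j _.
  have b0 : INR N.+1 <> 0 by apply: not_0_INR.
  rewrite /u -/(INR N.+1) mult_INR Rpow_mult_distr -Rinv_pow //; field; exact: pow_nonzero.
have := @is_lim_seq_bigsum n.+1 u
  (fun j => INR (slayers r j W) * a ^ n * (if j == n then / INR (Factorial.fact n) else 0))
  (fun i Hi => is_lim_seq_mult' _ _ _ _
  (is_lim_seq_const _) (@is_lim_seq_binomial_ratio i n Hi)).
rewrite big_ord_recr /= eqxx big1 ?Rplus_0_l; last first.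
  by move=> j _; rewrite /= (ltn_eqF (ltn_ord j)) Rmult_0_r.
by rewrite /nlinext -/n; congr is_lim_seq; congr Rbar.Finite; field; apply: INR_fact_neq_0.
Qed.

Lemma RlebP (a b : R) : reflect (a <= b) (Rleb a b).
Proof. by rewrite /Rleb; case: Rle_dec => H; constructor. Qed.

Lemma in_Omega_grid (T : finType) (lt : rel T) (W : {set T}) (s t : R) (N : nat)
    (g : {ffun T -> 'I_N.+2}) : s < t ->
  in_Omega lt W s t (grid_point s t g) = order_reversing lt W g.
Proof.
move=> st; have k0 : 0 < (t - s) / INR N.+1.
  by apply: Rdiv_lt_0_compat; [lra | apply: lt_0_INR; apply/ltP].
set k := (t - s) / INR N.+1 in k0.
have gpE v : grid_point s t g v = s + INR (g v) * k.
  by rewrite /grid_point /k; field; apply: not_0_INR.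
rewrite /in_Omega; have -> : [forall v in W, Rleb s (grid_point s t g v) &&
                                             Rleb (grid_point s t g v) t].
  apply/forall_inP => v _; apply/andP; split; apply/RlebP; rewrite gpE.
    by have := Rmult_le_pos _ _ (pos_INR (g v)) (Rlt_le _ _ k0); lra.
  have Hg : INR (g v) <= INR N.+1 by apply: le_INR; apply/leP; rewrite -ltnS.
  have := Rmult_le_compat_r _ _ _ (Rlt_le _ _ k0) Hg.
  have -> : INR N.+1 * k = t - s by rewrite /k; field; apply: not_0_INR.
  lra.
apply: eq_forallb => v; congr (_ ==> _); apply: eq_forallb => w.
congr (_ ==> _); congr (_ ==> _); apply/RlebP/idP; rewrite !gpE => H.
  by apply/leP; apply: INR_le; apply: (Rmult_le_reg_r _ _ _ k0); lra.
have : INR (g w) <= INR (g v) by apply: le_INR; apply/leP.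
by move/(Rmult_le_compat_r _ _ _ (Rlt_le _ _ k0)); lra.
Qed.

Lemma jordan_sumE (T : finType) (lt : rel T) (W : {set T}) (s t : R) (N : nat) :
  s < t -> jordan_sum lt W s t N = INR (wlayers lt N.+2 W) * ((t - s) / INR N.+1) ^ #|W|.
Proof.
move=> st; rewrite /jordan_sum -card_grid_maps; congr (INR _ * _).
by apply: eq_card => g; rewrite !inE in_Omega_grid.
Qed.

Section PosetFactorial.
Variables (T : finType) (lt : rel T).
Hypotheses (lt_trans : transitive lt) (lt_irr : irreflexive lt).

Lemma poset_factorialE (W : {set T}) :
  poset_factorial lt W = INR (Factorial.fact #|W|) / INR (nlinext lt W).
Proof.
have c0 : 0 < INR (nlinext lt W) by apply: lt_0_INR; apply/ltP; apply: nlinext_gt0.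
have f0 := INR_fact_lt_0 #|W|.
have Hex : is_poset_factorial lt W (INR (Factorial.fact #|W|) / INR (nlinext lt W)).
  split=> [|s t st]; first exact: Rdiv_lt_0_compat.
  apply/is_lim_seq_Reals/(is_lim_seq_ext _ _ _ (fun N => esym (jordan_sumE lt W N st))).
  by have := @is_lim_seq_grid_count T lt W (t - s); congr is_lim_seq; congr Rbar.Finite; field; lra.
have [fpos Hf] := epsilon_spec (inhabits R1) _ (ex_intro _ _ Hex).
have := UL_sequence _ _ _ (Hf 0 1 Rlt_0_1) (proj2 Hex 0 1 Rlt_0_1).
rewrite Rminus_0_r pow1 /Rdiv !Rmult_1_l => E.
by rewrite /poset_factorial -(Rinv_inv (epsilon _ _)) E Rinv_inv.
Qed.
End PosetFactorial.

Section BinomialDownsets.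
Variables (T : finType) (lt : rel T).
Hypotheses (lt_trans : transitive lt) (lt_irr : irreflexive lt).

Let term (h k : R) (D : {set T}) : R :=
  poset_factorial lt setT / (poset_factorial lt (~: D) * poset_factorial lt D)
  * h ^ #|~: D| * k ^ #|D|.

Lemma sum_downsets_card (h k : R) (j : nat) : (j <= #|T|)%N ->
  \big[Rplus/R0]_(D | downset lt setT D && (#|D| == j)) term h k D
  = Binomial.C #|T| j * k ^ j * h ^ (#|T| - j).
Proof.
move=> Hj; have ccp (W : {set T}) : 0 < INR (nlinext lt W).
  by apply: lt_0_INR; apply/ltP; apply: nlinext_gt0.
pose c := Binomial.C #|T| j * k ^ j * h ^ (#|T| - j) / INR (nlinext lt setT).
rewrite (eq_bigr (fun D => INR (nlinext lt D * nlinext lt (setT :\: D)) * c)); last first.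
  move=> D /andP[_ /eqP cD]; have cC : #|~: D| = (#|T| - j)%N by rewrite cardsCs setCK cD.
  rewrite /term !poset_factorialE // cC cD cardsT setTD mult_INR /c /Binomial.C.
  have := ccp setT; have := ccp D; have := ccp (~: D).
  have := INR_fact_lt_0 #|T|; have := INR_fact_lt_0 j; have := INR_fact_lt_0 (#|T| - j).
  by change (#|T| - j)%coq_nat with (#|T| - j)%N => *; field; lra.
have -> : \big[Rplus/R0]_(D | downset lt setT D && (#|D| == j))
            (INR (nlinext lt D * nlinext lt (setT :\: D)) * c)
          = INR (\sum_(D | downset lt setT D && (#|D| == j))
                   nlinext lt D * nlinext lt (setT :\: D)) * c.
  by rewrite INR_sum big_distrl.
by rewrite nlinext_split ?cardsT // /c; field; have := ccp setT; lra.
Qed.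

Lemma binomial_downsets (h k : R) :
  (h + k) ^ #|T| =
  \big[Rplus/R0]_(D | downset lt setT D) term h k D.
Proof.
rewrite (partition_big (fun D : {set T} => (inord #|D| : 'I_#|T|.+1)) xpredT) //.
rewrite (eq_bigr (fun j : 'I_#|T|.+1 => Binomial.C #|T| j * k ^ j * h ^ (#|T| - j))).
  by rewrite Rplus_comm Binomial.binomial sum_f_R0_big; apply: eq_bigr => i _; rewrite minusE.
move=> j _; rewrite -sum_downsets_card; last by rewrite -ltnS.
apply: eq_bigl => D; congr andb.
have : (#|D| < #|T|.+1)%N by rewrite ltnS max_card.
by move=> HD; apply/eqP/eqP => [<-|->]; [rewrite inordK | apply: val_inj; rewrite /= inordK].
Qed.
End BinomialDownsets.

Theorem mainTheorem8 (A : Type) (f : pforest A) (h k : R)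
    (hh : Rle 0 h) (hk : Rle 0 k) :
  pow (Rplus h k) (size (fverts f)) =
  \big[Rplus/R0]_(V2 : {set fvert f} | ll_downset V2)
     Rmult (Rmult
       (Rdiv (poset_factorial (@ll A f) setT)
             (Rmult (poset_factorial (@ll A f) (~: V2))
                    (poset_factorial (@ll A f) V2)))
       (pow h #|~: V2|))
       (pow k #|V2|).
Proof.
have -> : size (fverts f) = #|fvert f| by rewrite card_ord.
rewrite (binomial_downsets (@ll_trans A f) (@ll_irr A f)); apply: eq_bigl => V2.
rewrite /downset subsetT; apply: eq_forallb => v; congr (_ ==> _).
by apply: eq_forallb => w; rewrite in_setT.
Qed.
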